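(* Let $n \ge 2$ be an integer, $\lambda > 0$ a real number and $C \ge 1$. There exists a constant $C'>0$ depending only on $n$ and $C$ such that the following holds. Let $(p_0,\ldots,p_n) \in \mathbb{Z}^{n+1}$ with $q := p_0 \ge 1$, $C^{-1} q \le |p_i| \le C q$ for all $i$, and $|p_{i-1}p_{i+1} - p_i^2| \le C q^{1-\lambda}$ for all $i \in \{1,\ldots,n-1\}$. Then for all positive integers $m,k$ with $k-m+1 \ge 0$ and $k+m-1 \le n$, the $m\times m$ Hankel matrix $$\Delta_{m,k} = \begin{pmatrix} p_{k-m+1} & p_{k-m+2} & \cdots & p_k \\ p_{k-m+2} & p_{k-m+3} & \cdots & p_{k+1} \\ \vdots & \vdots & \ddots & \vdots \\ p_k & p_{k+1} & \cdots & p_{k+m-1}\end{pmatrix}$$ (whose $(r,s)$ entry is $p_{k-m+r+s-1}$) satisfies $|\det \Delta_{m,k}| \le C' q^{1-(m-1)\lambda}$.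
   Context: The paper writes these statements with Vinogradov notation ($\ll$, $\asymp$); here implied constants are made explicit. *)

From HB Require Import structures.
From mathcomp Require Import all_boot all_order all_algebra.
From mathcomp Require Import all_classical all_reals all_analysis.
Set Implicit Arguments. Unset Strict Implicit. Unset Printing Implicit Defensive.
Import Order.TTheory GRing.Theory Num.Theory.
Local Open Scope ring_scope.

(* Hankel matrix Delta_{m,k}: 0-based entry (r,s) is p_{k-m+1+r+s}
   (= paper's 1-based entry p_{k-m+r+s-1}). Requires k+1 >= m. *)
Definition hankel (R : ringType) (p : nat -> int) (m k : nat) : 'M[R]_m :=
  \matrix_(r < m, s < m) (p (k.+1 - m + r + s)%N)%:~R.

(* With r_i = p_(i+1) / p_i, the hypothesis on p_(i-1) p_(i+1) - p_i^2 says that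
   consecutive ratios differ by O(q^(-1-lambda)); telescoping, every 2x2 minor
   p_a p_(b+1) - p_(a+1) p_b = p_a p_b (r_b - r_a) is O(q^(1-lambda)).  Replacing
   each row i >= 1 of Delta by p_c (row i) - p_(c+1) (row i-1), where p_c is the
   top-left entry, multiplies the determinant by p_c^(m-1) and turns those rows
   into such minors, so the Leibniz expansion gives
   |p_c|^(m-1) |det Delta| = O(q * q^((m-1)(1-lambda))), and |p_c| >= q / C. *)

From HB Require Import structures.
From mathcomp Require Import all_boot all_order all_algebra.
From mathcomp Require Import all_classical all_reals all_analysis.
From mathcomp Require Import perm zify ring.
Import Order.TTheory GRing.Theory Num.Theory.
Local Open Scope ring_scope.

Lemma normr_det_le (R : realDomainType) m (A : 'M[R]_m) (B : 'I_m -> R) :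
  (forall i j, `|A i j| <= B i) -> `|\det A| <= m`!%:R * \prod_i B i.
Proof.
move=> leAB; rewrite /determinant (le_trans (ler_norm_sum _ _ _)) //.
apply: (@le_trans _ _ (\sum_(s : 'S_m) \prod_i B i)).
  apply: ler_sum => s _.
  rewrite normrM normrX normrN1 expr1n mul1r normr_prod.
  by apply: ler_prod => i _; rewrite normr_ge0 /=.
by rewrite sumr_const card_Sn mulr_natl.
Qed.

Definition shift_elim_mx {R : pzRingType} m (a b : R) : 'M[R]_m.+1 :=
  \matrix_(i, j) if i == j then (if i == 0 :> nat then 1 else a)
                 else if (j.+1 == i)%N then - b else 0.

Lemma det_shift_elim_mx {R : comPzRingType} m (a b : R) :
  \det (shift_elim_mx m a b) = a ^+ m.
Proof.
rewrite det_trig; last first.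
  apply/is_trig_mxP => i j lt_ij; rewrite mxE.
  by rewrite -val_eqE /= !ifF //; apply/negbTE; lia.
rewrite big_ord_recl mxE eqxx /= mul1r.
under eq_bigr => i _ do rewrite mxE eqxx /=.
by rewrite prodr_const card_ord.
Qed.

Lemma shift_elim_mx_row0 (R : pzRingType) m n (a b : R) (M : 'M[R]_(m.+1, n)) j :
  (shift_elim_mx m a b *m M) ord0 j = M ord0 j.
Proof.
rewrite mxE (bigD1 ord0) //= big1 => [|i ne_i0]; first by rewrite !mxE /= mul1r addr0.
by rewrite !mxE eq_sym (negbTE ne_i0) mul0r.
Qed.

Lemma shift_elim_mx_rowS (R : pzRingType) m n (a b : R) (M : 'M[R]_(m.+1, n))
    (i : 'I_m.+1) j :
  i != 0 :> nat ->
  (shift_elim_mx m a b *m M) i j = a * M i j - b * M (inord i.-1) j.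
Proof.
move=> ne_i0; have lt_im := ltn_ord i; have ne_ii : inord i.-1 != i :> 'I_m.+1.
  by rewrite -val_eqE /= inordK; lia.
rewrite mxE (bigD1 i) // (bigD1 (inord i.-1)) //= big1 => [|k /andP[ne_ki ne_ki']].
  rewrite !mxE eqxx (negbTE ne_i0) eq_sym (negbTE ne_ii) inordK; last by lia.
  by rewrite prednK ?lt0n // eqxx addr0 mulNr.
rewrite !mxE eq_sym (negbTE ne_ki) ifF ?mul0r //.
apply: contraNF ne_ki' => /eqP eq_ki; apply/eqP/val_inj; rewrite /= inordK; lia.
Qed.

Lemma hankel_det_mul_le (R : realDomainType) (P : nat -> R) c m (Bq Bd : R) :
  (forall i, (i <= c + m)%N -> `|P i| <= Bq) ->
  (forall b, (c <= b)%N -> (b < c + 2 * m)%N ->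
     `|P c * P b.+1 - P c.+1 * P b| <= Bd) ->
  `|\det (\matrix_(r < m.+1, s < m.+1) P (c + r + s)%N)| * `|P c| ^+ m
    <= m.+1`!%:R * (Bq * Bd ^+ m).
Proof.
move=> P_le minor_le.
rewrite -normrX -normrM mulrC -(det_shift_elim_mx m (P c) (P c.+1)) -det_mulmx.
have -> : Bq * Bd ^+ m = \prod_(i < m.+1) (if i == 0 :> nat then Bq else Bd).
  by rewrite big_ord_recl /= prodr_const card_ord.
apply: normr_det_le => i j; have lt_im := ltn_ord i; have lt_jm := ltn_ord j.
case: (eqVneq (i : nat) 0) => [i0|ne_i0].
  have -> : i = ord0 by apply: val_inj.
  by rewrite shift_elim_mx_row0 mxE P_le //= addn0 leq_add2l.
rewrite shift_elim_mx_rowS // !mxE inordK; last by lia.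
have -> : (c + i + j = (c + i.-1 + j).+1)%N by lia.
by rewrite minor_le //; lia.
Qed.

Section SlowlyVaryingRatios.

Variables (R : realFieldType) (P : nat -> R) (n : nat) (l U eps : R).
Hypothesis l_gt0 : 0 < l.
Hypothesis eps_ge0 : 0 <= eps.
Hypothesis P_ge : forall i, (i <= n)%N -> l <= `|P i|.
Hypothesis P_le : forall i, (i <= n)%N -> `|P i| <= U.
Hypothesis P_disc : forall i, (1 <= i)%N -> (i <= n - 1)%N ->
  `|P i.-1 * P i.+1 - P i ^+ 2| <= eps.

Let P_neq0 i : (i <= n)%N -> P i != 0.
Proof. by move=> le_in; rewrite -normr_gt0 (lt_le_trans l_gt0) ?P_ge. Qed.

Let U_ge0 : 0 <= U.
Proof. exact: le_trans (P_le _ (leq0n n)). Qed.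

Lemma ratio_step b : (b.+2 <= n)%N ->
  `|P b.+2 / P b.+1 - P b.+1 / P b| <= eps / l ^+ 2.
Proof.
move=> le_bn; have Pb0 : P b != 0 by apply: P_neq0; lia.
have Pb10 : P b.+1 != 0 by apply: P_neq0; lia.
have -> : P b.+2 / P b.+1 - P b.+1 / P b =
    (P b * P b.+2 - P b.+1 ^+ 2) / (P b * P b.+1) by field; rewrite Pb0 Pb10.
rewrite normrM normfV normrM ler_pM ?invr_ge0 ?mulr_ge0 //.
  by apply: P_disc b.+1 _ _; lia.
rewrite lef_pV2 ?posrE ?exprn_gt0 ?mulr_gt0 ?normr_gt0 //.
by rewrite expr2 ler_pM ?P_ge ?ltW //; lia.
Qed.

Lemma ratio_drift a b : (a <= b)%N -> (b < n)%N ->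
  `|P b.+1 / P b - P a.+1 / P a| <= (b - a)%:R * (eps / l ^+ 2).
Proof.
move=> + lt_bn; elim: b lt_bn => [|b IHb] lt_bn le_ab.
  by move: le_ab; rewrite leqn0 => /eqP ->; rewrite subrr normr0 mul0r.
case: (eqVneq a b.+1) => [->|ne_ab]; first by rewrite subrr normr0 subnn mul0r.
have le_ab' : (a <= b)%N by lia.
rewrite -(subrKA (P b.+1 / P b)) (le_trans (ler_normD _ _)) //.
rewrite subSn // -natr1 mulrDl mul1r addrC lerD ?ratio_step //.
exact: IHb (ltnW lt_bn) le_ab'.
Qed.

Lemma minor2_le a b : (a <= b)%N -> (b < n)%N ->
  `|P a * P b.+1 - P a.+1 * P b| <= (b - a)%:R * (U ^+ 2 * eps / l ^+ 2).
Proof.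
move=> le_ab lt_bn.
have Pa0 : P a != 0 by apply: P_neq0; lia.
have Pb0 : P b != 0 by apply: P_neq0; lia.
have -> : P a * P b.+1 - P a.+1 * P b = P a * P b * (P b.+1 / P b - P a.+1 / P a).
  by field; rewrite Pa0 Pb0.
have -> : (b - a)%:R * (U ^+ 2 * eps / l ^+ 2)
    = U ^+ 2 * ((b - a)%:R * (eps / l ^+ 2)) by ring.
by rewrite normrM ler_pM ?ratio_drift // normrM expr2 ler_pM ?P_le //; lia.
Qed.

Lemma hankel_det_le c m : (c + 2 * m <= n)%N ->
  `|\det (\matrix_(r < m.+1, s < m.+1) P (c + r + s)%N)|
    <= m.+1`!%:R * U * (n%:R * U ^+ 2 * eps / l ^+ 3) ^+ m.
Proof.
move=> le_cmn; set d := `|\det _|.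
have det_mul : d * `|P c| ^+ m
    <= m.+1`!%:R * (U * (n%:R * (U ^+ 2 * eps / l ^+ 2)) ^+ m).
  apply: hankel_det_mul_le => [i le_i|b le_cb lt_b]; first by apply: P_le; lia.
  apply: le_trans (@minor2_le c b le_cb _) _; first by lia.
  by rewrite ler_wpM2r ?divr_ge0 ?mulr_ge0 ?exprn_ge0 ?U_ge0 ?(ltW l_gt0) // ler_nat; lia.
have Pc_ge : l ^+ m <= `|P c| ^+ m.
  by rewrite lerXn2r ?nnegrE ?normr_ge0 ?(ltW l_gt0) ?P_ge //; lia.
have -> : m.+1`!%:R * U * (n%:R * U ^+ 2 * eps / l ^+ 3) ^+ m
    = m.+1`!%:R * (U * (n%:R * (U ^+ 2 * eps / l ^+ 2)) ^+ m) / l ^+ m.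
  rewrite -!mulrA -expr_div_n; congr (_ * (_ * (_ ^+ m))).
  by field; rewrite gt_eqF.
rewrite ler_pdivlMr ?exprn_gt0 //.
exact: le_trans (ler_wpM2l (normr_ge0 _) Pc_ge) det_mul.
Qed.

End SlowlyVaryingRatios.

Lemma powR_1subr (R : realType) (q x : R) : 0 < q -> q `^ (1 - x) = q * q `^ (- x).
Proof.
by move=> q_gt0; rewrite powRD ?powRr1 ?(ltW q_gt0) // (gt_eqF q_gt0) implybT.
Qed.

Theorem proposition4p2 (R : realType) (n : nat) (C : R) :
  (2 <= n)%N -> 1 <= C ->
  exists C' : R, 0 < C' /\
    forall (lambda : R) (p : nat -> int),
      0 < lambda ->
      (1 <= p 0%N)%R ->
      (forall i : nat, (i <= n)%N ->
         C^-1 * (p 0%N)%:~R <= `|(p i)%:~R : R| /\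
         `|(p i)%:~R : R| <= C * (p 0%N)%:~R) ->
      (forall i : nat, (1 <= i)%N -> (i <= n - 1)%N ->
         `|((p i.-1 * p i.+1 - p i ^+ 2)%:~R : R)|
           <= C * ((p 0%N)%:~R `^ (1 - lambda))) ->
      forall m k : nat, (0 < m)%N -> (0 < k)%N ->
        (m <= k + 1)%N -> (k + m - 1 <= n)%N ->
        `|\det (hankel R p m k)|
          <= C' * ((p 0%N)%:~R `^ (1 - (m%:R - 1) * lambda)).
Proof.
move=> le2n C_ge1; have C_gt0 : 0 < C := lt_le_trans ltr01 C_ge1.
pose K : R := n%:R * C ^+ 6.
have K_ge1 : 1 <= K by rewrite mulr_ege1 ?exprn_ege1 // ler1n; lia.
exists (n.+1`!%:R * C * K ^+ n); split.
  by rewrite !mulr_gt0 ?exprn_gt0 ?ltr0n ?fact_gt0 // (lt_le_trans ltr01 K_ge1).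
move=> lambda p _ p0_ge1 p_bounds p_disc [//|m] k _ _ le_mk le_kmn.
set q : R := (p 0%N)%:~R in p_bounds p_disc *.
have q_gt0 : 0 < q by rewrite (lt_le_trans ltr01) ?ler1z.
set u := q `^ (- lambda).
have -> : q `^ (1 - ((m.+1)%:R - 1) * lambda) = q * u ^+ m.
  by rewrite -natr1 addrK powR_1subr // -mulrN [m%:R * _]mulrC powRrM powR_mulrn ?powR_ge0.
pose P i : R := (p i)%:~R.
have P_ge i : (i <= n)%N -> q / C <= `|P i| by move=> /p_bounds[]; rewrite mulrC.
have P_le i : (i <= n)%N -> `|P i| <= C * q by move=> /p_bounds[].
have P_disc i : (1 <= i)%N -> (i <= n - 1)%N ->
    `|P i.-1 * P i.+1 - P i ^+ 2| <= C * (q * u).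
  by move=> ge_i1 le_in; have := p_disc i ge_i1 le_in; rewrite intrB intrM rmorphXn powR_1subr.
have -> : hankel R p m.+1 k = \matrix_(r, s) P (k.+1 - m.+1 + r + s)%N by [].
apply: le_trans (@hankel_det_le _ _ _ _ _ _ _ _ P_ge P_le P_disc (k.+1 - m.+1) m _) _.
- by rewrite divr_gt0.
- by rewrite !mulr_ge0 ?powR_ge0 ?ltW.
- by lia.
have -> : n%:R * (C * q) ^+ 2 * (C * (q * u)) / (q / C) ^+ 3 = K * u.
  by rewrite /K; field; rewrite !gt_eqF.
rewrite exprMn [X in X <= _](_ : _ = m.+1`!%:R * K ^+ m * (C * (q * u ^+ m))); last by ring.
rewrite [X in _ <= X](_ : _ = n.+1`!%:R * K ^+ n * (C * (q * u ^+ m))); last by ring.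
rewrite ler_wpM2r ?mulr_ge0 ?exprn_ge0 ?powR_ge0 ?(ltW C_gt0) ?(ltW q_gt0) //.
apply: ler_pM; rewrite ?exprn_ge0 ?(le_trans ler01 K_ge1) //.
- by rewrite ler_nat leq_fact; lia.
- by rewrite ler_weXn2l //; lia.
Qed.
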